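(* There exist a finite structure $\mathcal{A}$ and an $\omega$-categorical structure $\mathcal{B}$ over the same finite relational signature such that $\Pi_2\text{-}\mathrm{CSP}(\mathcal{A}) \subseteq \Pi_2\text{-}\mathrm{CSP}(\mathcal{B})$ but $\mathrm{QCSP}(\mathcal{A}) \not\subseteq \mathrm{QCSP}(\mathcal{B})$.
   Context: A countably infinite structure is $\omega$-categorical if it is, up to isomorphism, the unique countable model of its first-order theory. A positive Horn (pH) sentence is a first-order sentence built from atoms (relational and equalities) using only $\exists,\forall,\wedge$. $\mathrm{QCSP}(\mathcal{A})$ is the set of pH sentences true in $\mathcal{A}$, and $\Pi_2\text{-}\mathrm{CSP}(\mathcal{A})$ is the set of pH sentences of the form $\forall\bar x\exists\bar y\,P$ ($P$ a conjunction of atoms) true in $\mathcal{A}$. *)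

From Stdlib Require List.
From mathcomp Require Import all_boot.
Set Implicit Arguments. Unset Strict Implicit. Unset Printing Implicit Defensive.

Record signature := Signature { sym : finType; arity : sym -> nat }.

Record structure (S : signature) := Structure {
  dom :> Type;
  interp : forall r : sym S, ('I_(arity r) -> dom) -> Prop;
  dom_inhabited : inhabited dom }.

Inductive formula (S : signature) : Type :=
| FRel (r : sym S) (args : 'I_(arity r) -> nat)
| FEq (x y : nat)
| FFalse
| FNot (f : formula S)
| FAnd (f g : formula S)
| FOr (f g : formula S)
| FImp (f g : formula S)
| FEx (x : nat) (f : formula S)
| FAll (x : nat) (f : formula S).

Definition upd (A : Type) (v : nat -> A) (x : nat) (a : A) : nat -> A :=
  fun y => if y == x then a else v y.

Fixpoint sat (S : signature) (A : structure S) (v : nat -> A) (f : formula S)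
  : Prop :=
  match f with
  | FRel r args => @interp S A r (fun i => v (args i))
  | FEq x y => v x = v y
  | FFalse => False
  | FNot g => ~ sat v g
  | FAnd g h => sat v g /\ sat v h
  | FOr g h => sat v g \/ sat v h
  | FImp g h => sat v g -> sat v h
  | FEx x g => exists a : A, sat (upd v x a) g
  | FAll x g => forall a : A, sat (upd v x a) g
  end.

Fixpoint free (S : signature) (x : nat) (f : formula S) : Prop :=
  match f with
  | FRel r args => exists i, args i = x
  | FEq y z => x = y \/ x = z
  | FFalse => False
  | FNot g => free x g
  | FAnd g h | FOr g h | FImp g h => free x g \/ free x h
  | FEx y g | FAll y g => x <> y /\ free x g
  end.

Definition sentence (S : signature) (f : formula S) : Prop := forall x, ~ free x f.

Definition holds (S : signature) (A : structure S) (f : formula S) : Prop :=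
  forall v : nat -> A, sat v f.

Inductive pH (S : signature) : formula S -> Prop :=
| pH_rel r args : pH (@FRel S r args)
| pH_eq x y : pH (FEq S x y)
| pH_and f g : pH f -> pH g -> pH (FAnd f g)
| pH_ex x f : pH f -> pH (FEx x f)
| pH_all x f : pH f -> pH (FAll x f).

Inductive atom_conj (S : signature) : formula S -> Prop :=
| ac_rel r args : atom_conj (@FRel S r args)
| ac_eq x y : atom_conj (FEq S x y)
| ac_and f g : atom_conj f -> atom_conj g -> atom_conj (FAnd f g).

Inductive ex_block (S : signature) : formula S -> Prop :=
| eb_base f : atom_conj f -> ex_block f
| eb_ex x f : ex_block f -> ex_block (FEx x f).

Inductive pi2_form (S : signature) : formula S -> Prop :=
| p2_base f : ex_block f -> pi2_form f
| p2_all x f : pi2_form f -> pi2_form (FAll x f).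

Definition QCSP (S : signature) (A : structure S) (f : formula S) : Prop :=
  pH f /\ sentence f /\ holds A f.

Definition Pi2CSP (S : signature) (A : structure S) (f : formula S) : Prop :=
  pi2_form f /\ sentence f /\ holds A f.

Definition finite_type (T : Type) : Prop := exists l : seq T, forall x, List.In x l.
Definition countable_type (T : Type) : Prop := exists f : T -> nat, injective f.
Definition countably_infinite (T : Type) : Prop := countable_type T /\ ~ finite_type T.

Definition isomorphic (S : signature) (A B : structure S) : Prop :=
  exists (f : A -> B) (g : B -> A), cancel f g /\ cancel g f /\
    forall (r : sym S) (a : 'I_(arity r) -> A),
      @interp S A r a <-> @interp S B r (fun i => f (a i)).

Definition models_theory_of (S : signature) (B M : structure S) : Prop :=
  forall f : formula S, sentence f -> holds B f -> holds M f.

Definition omega_categorical (S : signature) (B : structure S) : Prop :=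
  countably_infinite B /\
  forall M : structure S, countable_type M -> models_theory_of B M -> isomorphic M B.

From mathcomp Require Import boolp.
From mathcomp Require Import all_boot zify.
Set Implicit Arguments. Unset Strict Implicit. Unset Printing Implicit Defensive.

(* Take one binary relation. A has a hub [None], related to everything, and
   two points [Some true], [Some false] that are not related to each other;
   B is nat * bool, where every point is related to everything except its mate.
   The pH sentence "some point is related to all points" holds in A (the hub)
   but fails in B.
   Pi_2 sentences transfer because every finite part of B is hit by a
   homomorphism from a power of A (collapse a tuple to its first non-hub
   coordinate) that has a section there: witnesses for the existential part are
   chosen coordinatewise in A and pushed to B.
   B is omega-categorical because its theory says that the non-edges form a
   fixed-point-free involution with infinitely many orbits, and enumerating
   orbit representatives of any countable such structure gives an isomorphism
   with B. *)

Lemma upd_id (T : Type) (v : nat -> T) x : upd v x (v x) = v.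
Proof. by apply: funext => y; rewrite /upd; case: eqP => // ->. Qed.

Lemma upd_comp (T U : Type) (g : T -> U) (v : nat -> T) x a :
  (fun y => g (upd v x a y)) = upd (g \o v) x (g a).
Proof. by apply: funext => y; rewrite /upd; case: (y == x). Qed.

Section Formulas.
Variable S : signature.
Implicit Types (f : formula S) (x : nat).

Lemma free_bound f : exists N, forall x, free x f -> x < N.
Proof.
elim: f => /= [r args|x y||g //|g [M IHg] h [N IHh]|g [M IHg] h [N IHh]
               |g [M IHg] h [N IHh]|y g [N IH]|y g [N IH]].
- by exists (\max_i args i).+1 => _ [i <-]; rewrite ltnS leq_bigmax.
- by exists (maxn x y).+1 => _ [->|->]; rewrite ltnS ?leq_maxl ?leq_maxr.
- by exists 0.
all: try by exists N => x [_ /IH].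
all: by exists (maxn M N) => x [/IHg|/IHh]; rewrite leq_max => ->; rewrite ?orbT.
Qed.

Variable M : structure S.

Lemma sat_ext f (v w : nat -> M) :
  (forall x, free x f -> v x = w x) -> sat v f <-> sat w f.
Proof.
elim: f v w => /= [r args|x y||g IH|g IHg h IHh|g IHg h IHh|g IHg h IHh
                  |y g IH|y g IH] v w vw.
- by have -> : (fun i => v (args i)) = (fun i => w (args i))
    by apply: funext => i; apply: vw; exists i.
- by rewrite (vw x) ?(vw y); auto.
- by [].
- by rewrite (IH v w).
all: try by rewrite (IHg v w) ?(IHh v w) => // x fx; apply: vw; auto.
all: have vw_upd a : forall x, free x g -> upd v y a x = upd w y a x
       by move=> x fx; rewrite /upd; case: eqP => // xy; exact: vw (conj xy fx).
- by split=> -[a ga]; exists a; apply/(IH _ _ (vw_upd a)).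
- by split=> ga a; apply/(IH _ _ (vw_upd a)).
Qed.

Lemma holds_FAll x f : holds M (FAll x f) -> holds M f.
Proof. by move=> fM v; rewrite -(upd_id v x); apply: fM. Qed.

Definition FTrue : formula S := FNot (FFalse S).

Definition big_and (g : nat -> formula S) (s : seq nat) : formula S :=
  foldr (fun j acc => FAnd (g j) acc) FTrue s.

Definition ex_many (s : seq nat) f : formula S := foldr (@FEx S) f s.

Lemma sat_big_and (v : nat -> M) g s :
  sat v (big_and g s) <-> forall j, j \in s -> sat v (g j).
Proof.
elim: s => [|i s IH] /=; first by split=> // _ [].
rewrite IH; split=> [[gi gs] j|gs].
  by rewrite inE => /orP [/eqP ->|/gs].
by split=> [|j js]; apply: gs; rewrite inE ?eqxx ?js ?orbT.
Qed.

Lemma free_big_and x g s : free x (big_and g s) -> exists2 j, j \in s & free x (g j).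
Proof.
elim: s => [|i s IH] //= [gi|/IH [j js gj]]; first by exists i; rewrite ?mem_head.
by exists j; rewrite // inE js orbT.
Qed.

Lemma sat_ex_many (v : nat -> M) s f :
  sat v (ex_many s f) <-> exists u : nat -> M, (forall x, x \notin s -> u x = v x) /\ sat u f.
Proof.
elim: s v => [|i s IH] v /=.
  split=> [fv|[u [uv fu]]]; first by exists v.
  by have -> : v = u by apply: funext => x; rewrite uv.
split=> [[a /IH [u [uv fu]]]|[u [uv fu]]].
  exists u; split=> // x; rewrite inE negb_or => /andP [xi xs].
  by rewrite uv // /upd (negbTE xi).
exists (u i); apply/IH; exists u; split=> // x xs.
rewrite /upd; case: eqP => [-> //|/eqP xi]; apply: uv; by rewrite inE negb_or xi.
Qed.

Lemma free_ex_many x s f : free x (ex_many s f) -> x \notin s /\ free x f.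
Proof.
elim: s => [|i s IH] //= [xi /IH [xs fx]]; split=> //.
by rewrite inE negb_or xs andbT; apply/eqP.
Qed.

End Formulas.

Section PowerHomomorphisms.
Variables (S : signature) (A B : structure S).

Definition power_hom (h : (nat -> A) -> B) : Prop :=
  forall (r : sym S) (a : 'I_(arity r) -> nat -> A),
    (forall k, @interp S A r (fun i => a i k)) -> @interp S B r (fun i => h (a i)).

Lemma sat_power_hom h f (w : nat -> nat -> A) :
  power_hom h -> ex_block f ->
  (forall k, sat (fun x => w x k) f) -> sat (fun x => h (w x)) f.
Proof.
move=> hom fe; elim: fe w => {f} [f fa|x f _ IH] w.
  elim: fa w => {f} [r args|x y|f g _ IHf _ IHg] w /=.
  - exact: (hom r (fun i => w (args i))).
  - by move=> wxy; congr h; apply: funext.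
  - by move=> fg; split; [apply: IHf|apply: IHg] => k; case: (fg k).
move=> /= wf; have [c cf] := choice wf.
exists (h c); rewrite -(upd_comp h); apply: IH => k.
have -> : (fun y => upd w x c y k) = upd (w^~ k) x (c k)
  := upd_comp (fun a : nat -> A => a k) w x c.
exact: cf.
Qed.

Definition locally_power_image : Prop :=
  forall (v : nat -> B) (N : nat), exists2 h, power_hom h &
    exists e : nat -> nat -> A, forall x, x < N -> h (e x) = v x.

Hypothesis B_image : locally_power_image.

Lemma ex_block_transfer f : ex_block f -> holds A f -> holds B f.
Proof.
move=> fe fA v; have [N fN] := free_bound f.
have [h hom [e ev]] := B_image v N.
apply/(@sat_ext _ _ f (fun x => h (e x))) => [x /fN|]; first exact: ev.
by apply: sat_power_hom => // k; apply: fA.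
Qed.

Lemma pi2_transfer f : pi2_form f -> holds A f -> holds B f.
Proof.
elim=> {f} [f /ex_block_transfer //|x f _ IH /holds_FAll fA v a].
exact: IH.
Qed.

Lemma Pi2CSP_transfer f : Pi2CSP A f -> Pi2CSP B f.
Proof. by case=> pf [sf fA]; do 2!split=> //; apply: pi2_transfer. Qed.

End PowerHomomorphisms.

Lemma nat_not_listed (l : seq nat) : exists n, ~ List.In n l.
Proof.
exists (sumn l).+1; suff: forall n, List.In n l -> n <= sumn l.
  by move=> ln /ln; rewrite ltnn.
elim: l => //= m l IH n [<-|/IH]; first exact: leq_addr.
by move/leq_trans; apply; apply: leq_addl.
Qed.

Lemma exists_ge_of_inj n (g : nat -> nat) :
  {in gtn n.+1 &, injective g} -> exists2 i, i < n.+1 & n <= g i.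
Proof.
move=> /mkseq_uniqP g_uniq; case: (lem (exists2 i, i < n.+1 & n <= g i)) => // small.
have: size (mkseq g n.+1) <= size (iota 0 n).
  apply: uniq_leq_size => // z /mapP [i]; rewrite mem_iota add0n => /= iN ->.
  rewrite mem_iota /= ltnNge; apply/negP => ngi; exact: small (ex_intro2 _ _ i iN ngi).
by rewrite size_mkseq size_iota ltnn.
Qed.

Section Rank.
Variable P : pred nat.

Definition rank n := count P (iota 0 n).

Lemma rankS n : rank n.+1 = rank n + P n.
Proof. by rewrite /rank -addn1 iotaD count_cat /= addn0. Qed.

Lemma leq_rank : {homo rank : m n / m <= n}.
Proof. by move=> m n mn; rewrite /rank -(subnKC mn) iotaD count_cat leq_addr. Qed.

Lemma rank_lt m n : P m -> m < n -> rank m < rank n.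
Proof. by move=> Pm mn; apply: leq_trans (leq_rank mn); rewrite rankS Pm addn1. Qed.

Lemma rank_inj : {in P &, injective rank}.
Proof.
move=> m n Pm Pn mn; case: (ltngtP m n) => // [/(rank_lt Pm)|/(rank_lt Pn)];
by rewrite mn ltnn.
Qed.

Hypothesis P_unbounded : forall N, exists2 m, N <= m & P m.

Lemma rank_unbounded k : exists N, k < rank N.
Proof.
elim: k => [|k [N kN]].
  by have [m _ Pm] := P_unbounded 0; exists m.+1; rewrite rankS Pm addn1.
have [m Nm Pm] := P_unbounded N; exists m.+1.
by rewrite rankS Pm addn1 ltnS (leq_trans kN (leq_rank Nm)).
Qed.

Lemma rank_surj k : exists2 m, P m & rank m = k.
Proof.
have [N] := rank_unbounded k; elim: N => [|N IH] //.
rewrite rankS; case: (ltnP k (rank N)) => [/IH //|kN].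
by case PN: (P N) => /= kNS; [exists N => //; lia|lia].
Qed.

End Rank.

Definition mate (q : nat * bool) : nat * bool := (q.1, ~~ q.2).

Lemma mateK : involutive mate.
Proof. by case=> k b; rewrite /mate negbK. Qed.

Lemma mate_neq q : mate q <> q.
Proof. by case: q => k [] []. Qed.

Section InvolutionEnumeration.
Variables (T : Type) (p : T -> T) (code : T -> nat).
Hypotheses (pK : involutive p) (p_neq : forall x, p x <> x) (code_inj : injective code).

Definition is_rep x := code x < code (p x).
Definition rep x := if is_rep x then x else p x.

Lemma is_repN x : is_rep (p x) = ~~ is_rep x.
Proof.
rewrite /is_rep pK ltn_neqAle -leqNgt.
by have /negPf -> : code (p x) != code x by apply/eqP => /code_inj /p_neq.
Qed.

Lemma rep_is_rep x : is_rep (rep x).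
Proof. by rewrite /rep; case rx: (is_rep x); rewrite ?is_repN rx. Qed.

Lemma rep_id x : is_rep x -> rep x = x.
Proof. by rewrite /rep => ->. Qed.

Lemma rep_p x : rep (p x) = rep x.
Proof. by rewrite /rep is_repN pK; case: (is_rep x). Qed.

Lemma eq_rep_orbit x y : rep x = rep y -> y = x \/ y = p x.
Proof.
rewrite /rep; case: (is_rep x); case: (is_rep y) => xy.
- by left.
- by right; rewrite xy pK.
- by right.
- by left; rewrite -(pK y) -xy pK.
Qed.

Definition rep_code n : bool := `[< exists r, is_rep r /\ code r = n >].

Definition index x := rank rep_code (code (rep x)).

Lemma rep_code_rep x : rep_code (code (rep x)).
Proof. by apply/asboolP; exists (rep x); split=> //; apply: rep_is_rep. Qed.

Lemma index_p x : index (p x) = index x.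
Proof. by rewrite /index rep_p. Qed.

Lemma eq_index_rep x y : index x = index y -> rep x = rep y.
Proof. by move/(rank_inj (rep_code_rep x) (rep_code_rep y))/code_inj. Qed.

Hypothesis orbits_inf : forall n, exists u : nat -> T,
  forall i j, i < n -> j < n -> i <> j -> u j <> u i /\ u j <> p (u i).

Lemma rep_code_unbounded N : exists2 m, N <= m & rep_code m.
Proof.
have [u uD] := orbits_inf N.+1.
have [i _ Ni] : exists2 i, i < N.+1 & N <= code (rep (u i)).
  apply: exists_ge_of_inj => i j iN jN /code_inj /eq_rep_orbit ij.
  by case: (eqVneq i j) => // /eqP /(uD i j iN jN) []; case: ij.
by exists (code (rep (u i))); last exact: rep_code_rep.
Qed.

Lemma index_surj k : exists r, is_rep r /\ index r = k.
Proof.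
have [m /asboolP [r [rr <-]] rk] := rank_surj rep_code_unbounded k.
by exists r; rewrite /index rep_id.
Qed.

Lemma involution_mate_bij :
  exists2 F : T -> nat * bool, bijective F & forall x, F (p x) = mate (F x).
Proof.
have [d dP] := choice index_surj.
exists (fun x => (index x, is_rep x)); last by move=> x; rewrite index_p is_repN.
exists (fun q => if q.2 then d q.1 else p (d q.1)) => [x|[k b]] /=.
  have [dr dx] := dP (index x).
  have -> : d (index x) = rep x by rewrite -(rep_id dr); apply: eq_index_rep.
  by rewrite /rep; case: (is_rep x).
have [dr dk] := dP k.
by case: b; rewrite ?index_p ?is_repN dk dr.
Qed.

End InvolutionEnumeration.

Definition Sig : signature := @Signature unit (fun=> 2).

Definition pair2 (T : Type) (a b : T) : 'I_2 -> T := fun i => if val i == 0 then a else b.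

Lemma pair2_comp (T U : Type) (g : T -> U) a b :
  (fun i => g (pair2 a b i)) = pair2 (g a) (g b).
Proof. by apply: funext => i; rewrite /pair2; case: (val i == 0). Qed.

Lemma pair2_eta (T : Type) (t : 'I_2 -> T) : t = pair2 (t ord0) (t ord_max).
Proof. by apply: funext => -[[|[|k]] ik] //=; congr t; apply: val_inj. Qed.

Definition Rel (M : structure Sig) (x y : M) : Prop := @interp Sig M tt (pair2 x y).

Definition Rf (x y : nat) : formula Sig := @FRel Sig tt (pair2 x y).

Lemma Rel_pair2 (M : structure Sig) (v : nat -> M) x y :
  @interp Sig M tt (fun i => v (pair2 x y i)) = Rel (v x) (v y).
Proof. by rewrite /Rel pair2_comp. Qed.

Lemma free_Rf z x y : free z (Rf x y) -> z = x \/ z = y.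
Proof. by case=> i <-; rewrite /pair2; case: (val i == 0); auto. Qed.

Definition binary_structure (T : Type) (R : T -> T -> Prop) (t0 : T) : structure Sig :=
  @Structure Sig T (fun _ t => R (t ord0) (t ord_max)) (inhabits t0).

Definition A_rel (x y : option bool) : Prop := if x is Some b then y <> Some (~~ b) else True.

Definition Astr : structure Sig := binary_structure A_rel None.
Definition Bstr : structure Sig := binary_structure (fun q q' => q' <> mate q) (0, true).

Lemma finite_A : finite_type Astr.
Proof. by exists [:: None; Some true; Some false] => -[[]|] /=; auto. Qed.

Definition dominating : formula Sig := FEx 0 (FAll 1 (Rf 1 0)).

Lemma QCSP_A_dominating : QCSP Astr dominating.
Proof.
split; first by rewrite /dominating /Rf; do 3!constructor.
split; first by move=> x /= [x0 [x1 /free_Rf]]; lia.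
by move=> v; exists None => -[b|].
Qed.

Lemma not_holds_B_dominating : ~ holds Bstr dominating.
Proof.
by move=> /(_ (fun=> (0, true))) [q /(_ (mate q))] /=; rewrite mateK.
Qed.

Section Collapse.
Variable m : nat.
Implicit Type x : nat -> option bool.

Definition first_hit x := find (fun k => x k != None) (iota 0 m).

Lemma first_hit_le x : first_hit x <= m.
Proof. by rewrite -(size_iota 0 m) find_size. Qed.

Lemma first_hitP x : first_hit x < m -> x (first_hit x) != None.
Proof.
move=> hm; have := nth_find 0 (a := fun k => x k != None) (s := iota 0 m).
by rewrite has_find size_iota nth_iota // => /(_ hm).
Qed.

Lemma before_first_hit x i : i < first_hit x -> x i = None.
Proof.
move=> ih; have := before_find 0 ih; rewrite nth_iota ?(leq_trans ih (first_hit_le x)) //.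
by rewrite add0n => /negbFE /eqP.
Qed.

(* Tuples with no non-hub coordinate below [m] go to [(m, true)]: no other
   image has first component [m]. *)
Definition collapse x : nat * bool :=
  let j := first_hit x in (j, if j < m then odflt true (x j) else true).

Lemma collapse_hom : power_hom (A := Astr) (B := Bstr) collapse.
Proof.
case=> a /=; set x := a ord0; set y := a ord_max => xy [ej].
rewrite ej; case: ifP => // jm.
have xj := first_hitP jm.
have yj : y (first_hit x) != None by rewrite -ej first_hitP ?ej.
move: (xy (first_hit x)) xj yj.
case: (x _) => [b|] //; case: (y _) => [c|] //= ne _ _ cb.
by apply: ne; rewrite cb.
Qed.

Definition point (q : nat * bool) : nat -> option bool :=
  fun k => if k == q.1 then Some q.2 else None.

Lemma collapse_point q : q.1 < m -> collapse (point q) = q.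
Proof.
move=> qm; have jq : first_hit (point q) = q.1.
  case: (ltngtP (first_hit (point q)) q.1) => // [jq|/before_first_hit].
    by have := first_hitP (ltn_trans jq qm); rewrite /point (ltn_eqF jq).
  by rewrite /point eqxx.
by rewrite /collapse jq qm /point eqxx; case: q {qm jq}.
Qed.

End Collapse.

Lemma B_locally_power_image : locally_power_image Astr Bstr.
Proof.
move=> v N; exists (collapse (\max_(x < N) (v x).1).+1); first exact: collapse_hom.
exists (fun x => point (v x)) => x xN; apply: collapse_point.
by rewrite ltnS (@leq_bigmax _ (fun x : 'I_N => (v x).1) (Ordinal xN)).
Qed.

Definition mate_exists : formula Sig :=
  FAll 0 (FEx 1 (FAnd (FNot (FEq Sig 1 0)) (FAnd (FNot (Rf 0 1)) (FNot (Rf 1 0))))).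

Definition mate_unique : formula Sig :=
  FAll 0 (FAll 1 (FAll 2 (FImp (FNot (Rf 0 1)) (FImp (FNot (Rf 0 2)) (FEq Sig 1 2))))).

Definition distinct_orbits (i j : nat) : formula Sig :=
  if i == j then FTrue Sig else FAnd (FNot (FEq Sig i j)) (Rf i j).

Definition many_orbits (n : nat) : formula Sig :=
  ex_many (iota 0 n) (big_and (fun i => big_and (distinct_orbits i) (iota 0 n)) (iota 0 n)).

Lemma sentence_mate_exists : sentence mate_exists.
Proof. by move=> x /= [x0 [x1 [[|]|[/free_Rf|/free_Rf]]]]; lia. Qed.

Lemma sentence_mate_unique : sentence mate_unique.
Proof. by move=> x /= [x0 [x1 [x2 [/free_Rf|[/free_Rf|]]]]]; lia. Qed.

Lemma sentence_many_orbits n : sentence (many_orbits n).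
Proof.
move=> x /free_ex_many [xn /free_big_and [i i_n /free_big_and [j j_n]]].
rewrite /distinct_orbits; case: eqP => _ //= [[]|/free_Rf[]] xij;
by move: xn; rewrite xij ?i_n ?j_n.
Qed.

Lemma holds_B_mate_exists : holds Bstr mate_exists.
Proof.
move=> v q; exists (mate q) => /=; rewrite /upd /pair2 /= mateK.
by split; [exact: mate_neq|split=> /(_ erefl) []].
Qed.

Lemma holds_B_mate_unique : holds Bstr mate_unique.
Proof.
move=> v q q1 q2 /=; rewrite /upd /pair2 /=.
by move=> /contrapT -> /contrapT ->.
Qed.

Lemma holds_B_many_orbits n : holds Bstr (many_orbits n).
Proof.
move=> v; apply/sat_ex_many.
exists (fun x => if x < n then (x, true) else v x); split.
  by move=> x; rewrite mem_iota leq0n add0n /= => /negbTE ->.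
apply/sat_big_and => i; rewrite mem_iota leq0n add0n /= => i_n.
apply/sat_big_and => j; rewrite mem_iota leq0n add0n /= => j_n.
rewrite /distinct_orbits; case: eqP => [_ /= []|/eqP ij] /=.
by rewrite /pair2 /= i_n j_n; split=> -[ji] //; rewrite ji eqxx in ij.
Qed.

Section ModelsOfTheoryB.
Variables (M : structure Sig) (thM : models_theory_of Bstr M).

Lemma model_mate :
  exists p : M -> M, [/\ involutive p, forall x, p x <> x & forall x y, Rel x y <-> y <> p x].
Proof.
case: (dom_inhabited M) => m0.
have ex_mate (x : M) : exists y, [/\ y <> x, ~ Rel x y & ~ Rel y x].
  have /= [y] := thM sentence_mate_exists holds_B_mate_exists (fun=> m0) x.
  by rewrite !Rel_pair2 /upd /= => -[yx [nxy nyx]]; exists y.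
have uniq_mate (x y z : M) : ~ Rel x y -> ~ Rel x z -> y = z.
  have /= := thM sentence_mate_unique holds_B_mate_unique (fun=> m0) x y z.
  by rewrite !Rel_pair2 /upd /=.
have [p pP] := choice ex_mate.
exists p; split=> [x|x|x y].
- by have [_ _ nxp] := pP x; have [_ npp _] := pP (p x); rewrite (uniq_mate _ _ _ npp nxp).
- by case: (pP x).
split=> [xy yp|ny]; first by have [_ + _] := pP x; rewrite -yp.
by case: (lem (Rel x y)) => // nxy; case: (pP x) => _ /(uniq_mate _ _ _ nxy) /ny [].
Qed.

Lemma model_many_orbits (p : M -> M) : (forall x y, Rel x y <-> y <> p x) ->
  forall n, exists u : nat -> M,
    forall i j, i < n -> j < n -> i <> j -> u j <> u i /\ u j <> p (u i).
Proof.
case: (dom_inhabited M) => m0 Rp n.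
have /sat_ex_many [u [_ /sat_big_and uD]] :=
  thM (@sentence_many_orbits n) (@holds_B_many_orbits n) (fun=> m0).
exists u => i j i_n j_n /eqP ij.
have in_n k : k < n -> k \in iota 0 n by rewrite mem_iota leq0n add0n.
have /sat_big_and /(_ j (in_n j j_n)) := uD i (in_n i i_n).
rewrite /distinct_orbits (negbTE ij) /= Rel_pair2 => -[uij /Rp].
by split=> // uji; apply: uij; rewrite uji.
Qed.

End ModelsOfTheoryB.

Lemma countably_infinite_B : countably_infinite Bstr.
Proof.
split; first by exists pickle; apply: pcan_inj pickleK_inv.
move=> [l lB]; have [n nl] := nat_not_listed (List.map fst l).
by apply: nl; apply: (List.in_map fst l (n, true)).
Qed.

Lemma omega_categorical_B : omega_categorical Bstr.
Proof.
split=> [|M [code code_inj] thM]; first exact: countably_infinite_B.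
have [p [pK p_neq Rp]] := model_mate thM.
have [F [G FK GK] Fp] :=
  involution_mate_bij pK p_neq code_inj (model_many_orbits thM Rp).
exists F, G; do 2!split=> //.
case=> a; rewrite (pair2_eta a) pair2_comp.
set x := a ord0; set y := a ord_max.
rewrite -/(Rel x y) Rp /= -Fp.
by split=> [yp /(can_inj FK)|Fyp yp]; last by apply: Fyp; rewrite yp.
Qed.

Theorem mainTheorem3 :
  exists (S : signature) (A B : structure S),
    finite_type A /\ omega_categorical B /\
    (forall f : formula S, Pi2CSP A f -> Pi2CSP B f) /\
    ~ (forall f : formula S, QCSP A f -> QCSP B f).
Proof.
exists Sig, Astr, Bstr; split; first exact: finite_A.
split; first exact: omega_categorical_B.
split; first exact: Pi2CSP_transfer B_locally_power_image.
by move=> AB; have [_ [_]] := AB _ QCSP_A_dominating; apply: not_holds_B_dominating.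
Qed.
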